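(* Let $\Gamma=(U\cup V,E)$ be a $3$-regular bipartite graph and let $\hat\Gamma$, $\eta$, $\eta'$, $\mathrm{sgn}$ and $\mu(F,f)$ be as described in the context. For any $2$-factor $F$ of $\Gamma$, any function $f:F\to\{0,1\}$ and any perfect matchings $\mu_1,\mu_2\in\mu(F,f)$, we have $\mathrm{sgn}(\mu_1)=\mathrm{sgn}(\mu_2)$.
   Context: Construction of $\hat\Gamma$: for each vertex $v$ of $\Gamma$ with neighbours $x,y,z$, there are four inner vertices $a_{v,S}$, one for each subset $S\subseteq\{x,y,z\}$ of even size (the set $I_v$), and six outer vertices $b_{v,u,0},b_{v,u,1}$ for $u\in\{x,y,z\}$ (the set $O_v$). Within the gadget, $a_{v,S}$ is adjacent to $b_{v,u,1}$ if $u\in S$ and to $b_{v,u,0}$ if $u\notin S$. For each edge $e=\{u,v\}\in E$ and $i\in\{0,1\}$ there is an edge $e_i$ joining $b_{v,u,i}$ and $b_{u,v,i}$. No other edges. Let $X=\bigcup_{v\in U}I_v\cup\bigcup_{v\in V}O_v$, $Y=\bigcup_{v\in V}I_v\cup\bigcup_{v\in U}O_v$, $n=|X|=|Y|=10|U|$, and fix bijections $\eta:X\to[n]$, $\eta':Y\to[n]$. A perfect matching is a bijection $\mu:X\to Y$ with $\mu(x)$ adjacent to $x$ for all $x$; $\mathrm{sgn}(\mu)$ is the sign of the permutation $\eta'\circ\mu\circ\eta^{-1}$ of $[n]$. A perfect matching $\mu$ is uniform if for every $e\in E$ at most one of $e_0,e_1$ is in $\mu$; then $F_\mu$ is the set of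 $e\in E$ with exactly one of $e_0,e_1$ in $\mu$, and $f_\mu(e)=i$ iff $e_i\in\mu$. A $2$-factor of $\Gamma$ is a set $F\subseteq E$ such that every vertex is incident to exactly two edges of $F$. $\mu(F,f)$ is the set of uniform perfect matchings $\mu$ with $F_\mu=F$ and $f_\mu=f$. *)

From mathcomp Require Import all_boot fingroup perm.
Set Implicit Arguments. Unset Strict Implicit. Unset Printing Implicit Defensive.

(* Vertex type of the gadget graph hat-Gamma built on Gamma with vertex type T:
   inl (v, A)    = inner vertex a_{v,A}
   inr (v, u, i) = outer vertex b_{v,u,i}   (i : bool, true = 1, false = 0) *)
Notation HV T := ((T * {set T}) + (T * T * bool))%type.

Section Gadget.
Variables (T : finType) (U : {set T}) (e : rel T).
(* Gamma = (U ∪ V, E) with V = ~: U and adjacency relation e. *)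

Definition nbhd (v : T) : {set T} := [set u | e v u].

Definition inner_ok (v : T) (A : {set T}) : bool :=
  (A \subset nbhd v) && ~~ odd #|A|.

Definition Iv (v : T) : {set HV T} :=
  [set x : HV T | if x is inl (w, A) then (w == v) && inner_ok v A else false].

Definition Ov (v : T) : {set HV T} :=
  [set x : HV T | if x is inr (w, u, _) then (w == v) && e v u else false].

Definition Xs : {set HV T} :=
  (\bigcup_(v in U) Iv v) :|: (\bigcup_(v in ~: U) Ov v).
Definition Ys : {set HV T} :=
  (\bigcup_(v in ~: U) Iv v) :|: (\bigcup_(v in U) Ov v).

Definition hadj (x y : HV T) : bool :=
  match x, y with
  | inl (v, A), inr (w, u, i) =>
      [&& inner_ok v A, w == v, e v u & i == (u \in A)]
  | inr (w, u, i), inl (v, A) =>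
      [&& inner_ok v A, w == v, e v u & i == (u \in A)]
  | inr (a, b, i), inr (c, d, j) =>
      [&& e a b, c == b, d == a & i == j]
  | _, _ => false
  end.

Definition edges : {set {set T}} :=
  [set s : {set T} | [exists u, exists v, e u v && (s == [set u; v])]].

Definition perfect_matching (mu : HV T -> HV T) : Prop :=
  [/\ {in Xs, forall x, mu x \in Ys /\ hadj x (mu x)},
      {in Xs &, injective mu} & mu @: Xs = Ys].

(* the pair {x, y} is the edge e_i of hat-Gamma associated to s = {u,v} *)
Definition ehat (s : {set T}) (i : bool) (x y : HV T) : bool :=
  [exists u, exists v,
     [&& e u v, s == [set u; v], x == inr (v, u, i) & y == inr (u, v, i)]].

Definition in_mu (mu : HV T -> HV T) (s : {set T}) (i : bool) : bool :=
  [exists x in Xs, ehat s i x (mu x)].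

Definition uniform (mu : HV T -> HV T) : Prop :=
  forall s, s \in edges -> ~~ (in_mu mu s false && in_mu mu s true).

Definition F_mu (mu : HV T -> HV T) : {set {set T}} :=
  [set s in edges | in_mu mu s false || in_mu mu s true].

Definition f_mu (mu : HV T -> HV T) (s : {set T}) : bool := in_mu mu s true.

Definition two_factor (F : {set {set T}}) : Prop :=
  F \subset edges /\ forall v : T, #|[set s in F | v \in s]| = 2.

Definition in_muFf (F : {set {set T}}) (f : {set T} -> bool)
    (mu : HV T -> HV T) : Prop :=
  [/\ perfect_matching mu, uniform mu, F_mu mu = F &
      {in F, forall s, f_mu mu s = f s}].

(* sign of the permutation eta' ∘ mu ∘ eta^{-1} of [n] (true = odd) *)
Definition sgn (n : nat) (eta eta' : HV T -> 'I_n) (mu : HV T -> HV T) : bool :=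
  odd_perm (insubd (1%g : {perm 'I_n})
    [ffun i : 'I_n => match [pick x in Xs | eta x == i] with
                      | Some x => eta' (mu x)
                      | None => i
                      end]).

End Gadget.

From HB Require Import structures.
From mathcomp Require Import all_boot fingroup perm.
Set Implicit Arguments. Unset Strict Implicit. Unset Printing Implicit Defensive.

(* Both matchings contain exactly the edges [e_i] prescribed by [(F, f)], so
   they differ only inside the gadgets.  At a vertex [v], the two edges of [F]
   use up one outer vertex of [v] each, and the remaining four inner and four
   outer vertices of [v] span a graph with exactly two perfect matchings, whose
   union is an edge plus a 6-cycle.  Hence the permutation [mu1^-1 mu2] of [X]
   has order dividing 3; it is therefore even and [sgn mu1 = sgn mu2]. *)

(* The partial map [x |-> h1^-1 (h2 x)] on [D] has cube the identity. *)
Definition cube_trivial (A B : Type) (D : {pred A}) (h1 h2 : A -> B) : Prop :=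
  forall x x1 x2 x3, x \in D -> x1 \in D -> x2 \in D -> x3 \in D ->
  h1 x1 = h2 x -> h1 x2 = h2 x1 -> h1 x3 = h2 x2 -> x3 = x.

Lemma cube_trivial_inverse (A B : Type) (h1 h2 : A -> B) (g1 g2 : B -> A) :
  cancel g1 h1 -> cancel g2 h2 -> cube_trivial predT h2 h1 -> cube_trivial predT g1 g2.
Proof.
move=> g1K g2K cube a a1 a2 a3 _ _ _ _ E1 E2 E3.
have -> : a3 = h2 (g2 a3) by rewrite g2K.
have -> : a = h2 (g2 a) by rewrite g2K.
congr h2; apply: (cube _ (g2 a1) (g2 a2)) => //.
- by rewrite g2K -E1 g1K.
- by rewrite g2K -E2 g1K.
- by rewrite g2K -E3 g1K.
Qed.

Lemma cube_trivial_transfer (V L R : Type) (D : {pred V}) (mu1 mu2 : V -> V)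
    (inX : L -> V) (inY : R -> V) (h1 h2 : L -> R) :
  injective inY ->
  (forall l, mu1 (inX l) = inY (h1 l)) -> (forall l, mu2 (inX l) = inY (h2 l)) ->
  (forall x r, x \in D -> mu1 x = inY r -> exists l, x = inX l) ->
  cube_trivial predT h1 h2 ->
  forall l x1 x2 x3, x1 \in D -> x2 \in D -> x3 \in D ->
  mu1 x1 = mu2 (inX l) -> mu1 x2 = mu2 x1 -> mu1 x3 = mu2 x2 -> x3 = inX l.
Proof.
move=> inY_inj mu1E mu2E mu1_back cube l x1 x2 x3 Dx1 Dx2 Dx3.
have step y l' : y \in D -> mu1 y = mu2 (inX l') -> exists2 l'', y = inX l'' & h1 l'' = h2 l'.
  move=> Dy; rewrite mu2E => E; have [l'' Ey] := mu1_back _ _ Dy E.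
  by exists l'' => //; apply: inY_inj; rewrite -mu1E -Ey.
move=> /(step _ _ Dx1)[l1 -> E1] /(step _ _ Dx2)[l2 -> E2] /(step _ _ Dx3)[l3 -> E3].
by rewrite (cube l l1 l2 l3).
Qed.

Lemma cube_trivial_rotation (A B : Type) (h1 h2 : A -> B) (rho : A -> A) :
  injective h2 -> h1 =1 h2 \o rho -> (forall x, rho (rho (rho x)) = x) ->
  cube_trivial predT h1 h2 /\ cube_trivial predT h2 h1.
Proof.
move=> h2_inj h1E rho3; split=> x x1 x2 x3 _ _ _ _; rewrite !h1E.
  by move=> /h2_inj <- /h2_inj <- /h2_inj <-.
by move=> /h2_inj -> /h2_inj -> /h2_inj ->.
Qed.

Lemma odd_perm_expg (aT : finType) (s : {perm aT}) k :
  odd_perm (s ^+ k)%g = odd k && odd_perm s.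
Proof.
elim: k => [|k IHk]; first by rewrite expg0 odd_perm1.
by rewrite expgS odd_permM IHk /=; case: (odd_perm s); case: (odd k).
Qed.

Lemma odd_perm_odd_order (aT : finType) (s : {perm aT}) k :
  (s ^+ k = 1)%g -> odd k -> odd_perm s = false.
Proof. by move=> sk1 k_odd; rewrite -[odd_perm s]andTb -k_odd -odd_perm_expg sk1 odd_perm1. Qed.

Section Sign.
Variables (T : finType) (U : {set T}) (e : rel T).
Variables (n : nat) (eta eta' : HV T -> 'I_n).
Local Notation X := (Xs U e).
Local Notation Y := (Ys U e).
Hypothesis eta_bij : {in X &, injective eta} /\ eta @: X = [set: 'I_n].
Hypothesis eta'_bij : {in Y &, injective eta'} /\ eta' @: Y = [set: 'I_n].

Lemma eta_onto i : exists2 x, x \in X & i = eta x.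
Proof.
have /imsetP[x Xx ->] : i \in eta @: X by rewrite eta_bij.2 inE.
by exists x.
Qed.

Lemma sgn_odd_perm mu : perfect_matching U e mu ->
  exists2 P : {perm 'I_n}, sgn U e eta eta' mu = odd_perm P &
    {in X, forall x, P (eta x) = eta' (mu x)}.
Proof.
case=> mu_adj mu_inj _; rewrite /sgn; set g := [ffun i => _].
have gE : {in X, forall x, g (eta x) = eta' (mu x)}.
  move=> x Xx; rewrite ffunE; case: pickP => [x' /andP[Xx' /eqP /eta_bij.1 -> //]|].
  by move/(_ x); rewrite Xx eqxx.
have g_inj : injective g.
  move=> i j; have [x Xx ->] := eta_onto i; have [y Xy ->] := eta_onto j.
  rewrite !gE // => /eta'_bij.1 E; congr eta; apply: mu_inj => //.
  by apply: E; [apply: (mu_adj x Xx).1 | apply: (mu_adj y Xy).1].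
exists (perm g_inj); last by move=> x Xx; rewrite permE gE.
congr odd_perm; apply/permP => i; rewrite permE.
have gP : g \in [pred h : {ffun 'I_n -> 'I_n} | injectiveb h] by apply/injectiveP.
by rewrite /insubd insubT /= [@fun_of_perm]unlock SubK.
Qed.

Lemma sgn_eq_of_cube_trivial mu1 mu2 :
  perfect_matching U e mu1 -> perfect_matching U e mu2 -> cube_trivial X mu1 mu2 ->
  sgn U e eta eta' mu1 = sgn U e eta eta' mu2.
Proof.
move=> pm1 pm2 cube.
have [P1 -> P1E] := sgn_odd_perm pm1; have [P2 -> P2E] := sgn_odd_perm pm2.
pose R := (P2 * P1^-1)%g.
have R_step x : x \in X -> exists2 x1, x1 \in X & mu1 x1 = mu2 x /\ R (eta x) = eta x1.
  move=> Xx; case: pm2 => /(_ x Xx)[Ymu2x _] _ _.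
  move: Ymu2x; case: pm1 => _ _ <- /imsetP[x1 Xx1 E]; exists x1 => //.
  by rewrite permM P2E // E -P1E // permK.
have R3 : (R ^+ 3 = 1)%g.
  apply/permP => i; rewrite perm1 permX /=; have [x Xx ->] := eta_onto i.
  have [x1 Xx1 [E1 ->]] := R_step x Xx; have [x2 Xx2 [E2 ->]] := R_step x1 Xx1.
  have [x3 Xx3 [E3 ->]] := R_step x2 Xx2.
  by rewrite (cube x x1 x2 x3).
have := odd_perm_odd_order R3 isT.
by rewrite odd_permM odd_permV; case: (odd_perm P1); case: (odd_perm P2).
Qed.

End Sign.

Inductive port := PortP | PortQ | PortR of bool.

Definition port_code (a : port) : option (option bool) :=
  match a with PortP => None | PortQ => Some None | PortR j => Some (Some j) end.
Definition port_decode (o : option (option bool)) : port :=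
  match o with None => PortP | Some None => PortQ | Some (Some j) => PortR j end.
Lemma port_codeK : cancel port_code port_decode. Proof. by case. Qed.
HB.instance Definition _ := Equality.copy port (can_type port_codeK).

(* Local model of the gadget of a vertex [v] with 2-factor neighbours [p], [q]
   and third neighbour [r]: the inner vertex [a_{v,A}] is coded by
   [(p \in A, q \in A)], and since [b_{v,p,f{v,p}}] and [b_{v,q,f{v,q}}] are
   matched outside the gadget, the outer vertices left for the inner ones are
   [b_{v,p,cp}], [b_{v,q,cq}], [b_{v,r,0}], [b_{v,r,1}] with [cp = ~~ f{v,p}]
   and [cq = ~~ f{v,q}]. *)
Definition ladj (cp cq : bool) (s : bool * bool) (a : port) : bool :=
  match a with
  | PortP => s.1 == cp
  | PortQ => s.2 == cq
  | PortR j => j == s.1 (+) s.2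
  end.

(* The two perfect matchings of the gadget; [b] tells which of [PortP], [PortQ]
   is matched to the inner vertex [(cp, cq)]. *)
Definition lmatch (b cp cq : bool) (s : bool * bool) : port :=
  match s.1 == cp, s.2 == cq with
  | true, true => if b then PortQ else PortP
  | true, false => if b then PortP else PortR (s.1 (+) s.2)
  | false, true => if b then PortR (s.1 (+) s.2) else PortQ
  | false, false => PortR (s.1 (+) s.2)
  end.

Definition bools := [:: false; true].
Definition sides : seq (bool * bool) :=
  [:: (false, false); (false, true); (true, false); (true, true)].
Definition ports : seq port := [:: PortP; PortQ; PortR false; PortR true].

Lemma mem_bools b : b \in bools. Proof. by case: b. Qed.
Lemma mem_sides s : s \in sides. Proof. by case: s => [[] []]. Qed.
Lemma mem_ports a : a \in ports. Proof. by case: a => [| |[]]. Qed.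

Definition side_table (a00 a01 a10 a11 : port) (s : bool * bool) : port :=
  match s with
  | (false, false) => a00 | (false, true) => a01
  | (true, false) => a10 | (true, true) => a11
  end.

Definition port_table (sP sQ s0 s1 : bool * bool) (a : port) : bool * bool :=
  match a with PortP => sP | PortQ => sQ | PortR false => s0 | PortR true => s1 end.

Lemma side_tableE (h : bool * bool -> port) :
  h =1 side_table (h (false, false)) (h (false, true)) (h (true, false)) (h (true, true)).
Proof. by case=> [[] []]. Qed.

Lemma port_tableE (g : port -> bool * bool) :
  g =1 port_table (g PortP) (g PortQ) (g (PortR false)) (g (PortR true)).
Proof. by case=> [| |[]]. Qed.

Lemma lmatch_cases cp cq (h : bool * bool -> port) :
  (forall s, ladj cp cq s (h s)) -> injective h -> exists b, h =1 lmatch b cp cq.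
Proof.
move=> h_adj h_inj.
have : all (fun cp => all (fun cq =>
         all (fun a00 => all (fun a01 => all (fun a10 => all (fun a11 =>
           let t := side_table a00 a01 a10 a11 in
           all (fun s => ladj cp cq s (t s)) sides && uniq (map t sides) ==>
           has (fun b => all (fun s => t s == lmatch b cp cq s) sides) bools)
         ports) ports) ports) ports) bools) bools by vm_compute.
move=> /allP/(_ _ (mem_bools cp)) /allP/(_ _ (mem_bools cq)).
move=> /allP/(_ _ (mem_ports (h (false, false)))) /allP/(_ _ (mem_ports (h (false, true)))).
move=> /allP/(_ _ (mem_ports (h (true, false)))) /allP/(_ _ (mem_ports (h (true, true)))).
move: (side_tableE h); set t := side_table _ _ _ _ => ht.
cbv zeta => /implyP check.
have /check/hasP[b _ /allP hb] : all (fun s => ladj cp cq s (t s)) sides && uniq (map t sides).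
  by rewrite -(eq_map ht) (map_inj_uniq h_inj) // andbT; apply/allP=> s _; rewrite -ht.
by exists b => s; apply/eqP; rewrite ht hb ?mem_sides.
Qed.

Lemma lmatch_inverse_cases cp cq (g : port -> bool * bool) :
  (forall a, ladj cp cq (g a) a) -> injective g -> exists b, cancel g (lmatch b cp cq).
Proof.
move=> g_adj g_inj.
have : all (fun cp => all (fun cq =>
         all (fun sP => all (fun sQ => all (fun s0 => all (fun s1 =>
           let t := port_table sP sQ s0 s1 in
           all (fun a => ladj cp cq (t a) a) ports && uniq (map t ports) ==>
           has (fun b => all (fun a => lmatch b cp cq (t a) == a) ports) bools)
         sides) sides) sides) sides) bools) bools by vm_compute.
move=> /allP/(_ _ (mem_bools cp)) /allP/(_ _ (mem_bools cq)).
move=> /allP/(_ _ (mem_sides (g PortP))) /allP/(_ _ (mem_sides (g PortQ))).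
move=> /allP/(_ _ (mem_sides (g (PortR false)))) /allP/(_ _ (mem_sides (g (PortR true)))).
move: (port_tableE g); set t := port_table _ _ _ _ => gt.
cbv zeta => /implyP check.
have /check/hasP[b _ /allP hb] : all (fun a => ladj cp cq (t a) a) ports && uniq (map t ports).
  by rewrite -(eq_map gt) (map_inj_uniq g_inj) // andbT; apply/allP=> a _; rewrite -gt.
by exists b => a; apply/eqP; rewrite gt hb ?mem_ports.
Qed.

Definition rot (cp cq : bool) (s : bool * bool) : bool * bool :=
  match s.1 == cp, s.2 == cq with
  | true, true => (cp, ~~ cq)
  | true, false => (~~ cp, cq)
  | false, true => (cp, cq)
  | false, false => s
  end.

Lemma rot3 cp cq s : rot cp cq (rot cp cq (rot cp cq s)) = s.
Proof. by case: cp cq s => [] [] [[] []]. Qed.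

Lemma lmatch_rot cp cq : lmatch false cp cq =1 lmatch true cp cq \o rot cp cq.
Proof. by case: cp cq => [] [] [[] []]. Qed.

Lemma lmatch_inj b cp cq : injective (lmatch b cp cq).
Proof.
move=> s s'; apply: contra_eq => /negPf ss'; apply/negP.
by move: ss'; case: b cp cq s s' => [] [] [] [[] []] [[] []].
Qed.

Lemma lmatch_cube b1 b2 cp cq : cube_trivial predT (lmatch b1 cp cq) (lmatch b2 cp cq).
Proof.
have [rot_cube cube_rot] :=
  cube_trivial_rotation (@lmatch_inj true cp cq) (lmatch_rot cp cq) (rot3 cp cq).
have id_cube b : cube_trivial predT (lmatch b cp cq) (lmatch b cp cq).
  by have [] := @cube_trivial_rotation _ _ _ _ id (@lmatch_inj b cp cq) (frefl _) (fun=> erefl).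
by case: b1 b2 => [] [].
Qed.

Lemma local_matching_cube cp cq (h1 h2 : bool * bool -> port) :
  (forall s, ladj cp cq s (h1 s)) -> injective h1 ->
  (forall s, ladj cp cq s (h2 s)) -> injective h2 -> cube_trivial predT h1 h2.
Proof.
move=> adj1 inj1 adj2 inj2 s s1 s2 s3.
have [b1 h1E] := lmatch_cases adj1 inj1; have [b2 h2E] := lmatch_cases adj2 inj2.
rewrite !h1E !h2E; exact: lmatch_cube.
Qed.

Lemma local_comatching_cube cp cq (g1 g2 : port -> bool * bool) :
  (forall a, ladj cp cq (g1 a) a) -> injective g1 ->
  (forall a, ladj cp cq (g2 a) a) -> injective g2 -> cube_trivial predT g1 g2.
Proof.
move=> adj1 inj1 adj2 inj2.
have [b1 g1K] := lmatch_inverse_cases adj1 inj1.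
have [b2 g2K] := lmatch_inverse_cases adj2 inj2.
apply: (cube_trivial_inverse g1K g2K); exact: lmatch_cube.
Qed.

Section Gadget.
Variables (T : finType) (U : {set T}) (e : rel T).
Hypothesis e_sym : symmetric e.
Hypothesis e_bip : forall x y, e x y -> (x \in U) = (y \notin U).
Hypothesis e_3reg : forall v : T, #|[set u | e v u]| = 3.
Variables (F : {set {set T}}) (f : {set T} -> bool).
Local Notation X := (Xs U e).

Lemma e_irrefl v : e v v = false.
Proof. by apply/negP => /e_bip; case: (v \in U). Qed.

Lemma mem_bigcup_Iv (P : {pred T}) x : (x \in \bigcup_(w in P) Iv e w) =
  if x is inl (v, A) then (v \in P) && inner_ok e v A else false.
Proof.
apply/bigcupP/idP => [[w Pw]|]; case: x => [[v A]|[[v u] i]] //; rewrite ?inE //.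
  by case/andP => /eqP -> ->; rewrite Pw.
by case/andP => Pv okA; exists v; rewrite ?inE ?eqxx.
Qed.

Lemma mem_bigcup_Ov (P : {pred T}) x : (x \in \bigcup_(w in P) Ov e w) =
  if x is inr (v, u, _) then (v \in P) && e v u else false.
Proof.
apply/bigcupP/idP => [[w Pw]|]; case: x => [[v A]|[[v u] i]] //; rewrite ?inE //.
  by case/andP => /eqP -> ->; rewrite Pw.
by case/andP => Pv evu; exists v; rewrite ?inE ?eqxx.
Qed.

Lemma inner_in_Xs v A : (inl (v, A) \in X) = (v \in U) && inner_ok e v A.
Proof. by rewrite /Xs inE mem_bigcup_Iv mem_bigcup_Ov orbF. Qed.

Lemma outer_in_Xs v u i : (inr (v, u, i) \in X) = (v \notin U) && e v u.
Proof. by rewrite /Xs inE mem_bigcup_Iv mem_bigcup_Ov in_setC. Qed.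

Lemma set2_in_edges v u : e v u -> [set v; u] \in edges e.
Proof.
by move=> evu; rewrite inE; apply/existsP; exists v; apply/existsP; exists u; rewrite evu eqxx.
Qed.

Lemma edge_at s v : s \in edges e -> v \in s -> exists2 u, e v u & s = [set v; u].
Proof.
rewrite inE => /existsP[a /existsP[b /andP[eab /eqP ->]]] /set2P[] ->; first by exists b.
by exists a; rewrite 1?e_sym // setUC.
Qed.

Lemma two_factor_nbhd v : two_factor e F -> exists p q r,
  [/\ nbhd e v = [set p; q; r], p != q, [set v; p] \in F, [set v; q] \in F
    & [set v; r] \notin F].
Proof.
case=> /subsetP F_edges F_deg.
set N := nbhd e v; set P := [set u in N | [set v; u] \in F].
have P_sub : P \subset N by apply/subsetP => u; rewrite inE => /andP[].
have card_P : #|P| = 2.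
  rewrite -(F_deg v); have -> : [set s in F | v \in s] = (fun u => [set v; u]) @: P.
    apply/setP => s; rewrite inE; apply/andP/imsetP => [[sF vs]|[u uP ->]].
      have [u evu sE] := edge_at (F_edges _ sF) vs.
      by exists u => //; rewrite !inE evu -sE sF.
    by move: uP; rewrite inE => /andP[_ uF]; rewrite uF set21.
  apply/esym/card_in_imset => u u' /(subsetP P_sub) Nu _ E.
  have /set2P[uv|] // : u \in [set v; u'] by rewrite -E set22.
  by move: Nu; rewrite inE uv e_irrefl.
have /cards2P[p [q [npq PE]]] : #|P| == 2 by rewrite card_P.
have /cards1P[r DE] : #|N :\: P| == 1 by rewrite cardsD (setIidPr P_sub) card_P e_3reg.
have NE : N = [set p; q; r] by rewrite -(setID N P) (setIidPr P_sub) DE PE.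
have [rN rP] : r \in N /\ r \notin P by apply/andP; rewrite andbC -in_setD DE set11.
have inPF u : u \in P -> [set v; u] \in F by rewrite inE => /andP[].
exists p, q, r; split => //.
- by apply: inPF; rewrite PE set21.
- by apply: inPF; rewrite PE set22.
- by move: rP; rewrite inE rN.
Qed.

(* The edge [e_i] of [{v, u}] belongs to every matching of [mu(F, f)]. *)
Definition prescribed v u i : bool := ([set v; u] \in F) && (f [set v; u] == i).

Lemma prescribedC v u i : prescribed v u i = prescribed u v i.
Proof. by rewrite /prescribed setUC. Qed.

Section Matching.
Variable mu : HV T -> HV T.
Hypothesis mu_Ff : in_muFf U e F f mu.

Lemma in_muFf_inj : {in X &, injective mu}.
Proof. by case: mu_Ff => [[]]. Qed.

Lemma in_muFf_adj x : x \in X -> hadj e x (mu x).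
Proof. by case: mu_Ff => [[mu_adj _ _] _ _ _] /mu_adj[]. Qed.

Lemma in_mu_F s : s \in F -> in_mu U e mu s (f s).
Proof.
case: mu_Ff => [_ _ <- f_muE] sF; move: (f_muE _ sF) (sF); rewrite /f_mu /F_mu inE.
by case: (f s) => E; rewrite E; case/andP => _; rewrite ?orbF.
Qed.

Lemma in_muFf_outerE v u i : inr (v, u, i) \in X ->
  (mu (inr (v, u, i)) == inr (u, v, i)) = prescribed v u i.
Proof.
move=> Xx; move: (Xx); rewrite outer_in_Xs => /andP[vU evu].
have s_edge := set2_in_edges evu.
case: mu_Ff => [_ unif F_muE f_muE]; apply/eqP/andP => [mu_x|[sF /eqP <-]].
  have in_s : in_mu U e mu [set v; u] i.
    apply/existsP; exists (inr (v, u, i)); rewrite Xx mu_x /=.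
    by apply/existsP; exists u; apply/existsP; exists v; rewrite e_sym evu setUC !eqxx.
  have sF : [set v; u] \in F.
    by rewrite -F_muE inE s_edge; case: (i) in_s => ->; rewrite ?orbT.
  split=> //; apply/eqP; rewrite -f_muE // /f_mu; case: (i) in_s => // in_s0.
  by apply: negbTE; move: (unif _ s_edge); rewrite in_s0.
have /existsP[x /andP[Xx' /existsP[u' /existsP[v' /and4P[eu'v' /eqP sE /eqP xE /eqP]]]]] :=
  in_mu_F sF.
rewrite xE; move: Xx'; rewrite xE outer_in_Xs => /andP[v'U _].
have uU : u \in U by rewrite (e_bip (_ : e u v)) // e_sym.
have /set2P[v'v|v'u] : v' \in [set v; u] by rewrite sE set22.
  have /set2P[u'v|->] : u' \in [set v; u] by rewrite sE set21.
    by move: eu'v'; rewrite u'v v'v e_irrefl.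
  by rewrite v'v.
by move: v'U; rewrite v'u uU.
Qed.

Lemma in_muFf_outer_inner v u i : inr (v, u, i) \in X -> ~~ prescribed v u i ->
  exists2 A, mu (inr (v, u, i)) = inl (v, A) & inner_ok e v A.
Proof.
move=> Xx; rewrite -(in_muFf_outerE Xx); have := in_muFf_adj Xx.
case: (mu _) => [[w A] /and4P[okA /eqP -> _ _] _|[[a b] j]]; first by exists A.
by case/and4P=> _ /eqP -> /eqP -> /eqP ->; rewrite eqxx.
Qed.

Lemma in_muFf_inner v A : inl (v, A) \in X ->
  exists u, [/\ e v u, ~~ prescribed v u (u \in A) & mu (inl (v, A)) = inr (v, u, u \in A)].
Proof.
move=> Xx; have := in_muFf_adj Xx; case E: (mu _) => [//|[[w u] i]].
case/and4P=> _ /eqP wv evu /eqP iA; subst w i; exists u; split=> //; apply/negP => pres.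
move: (Xx); rewrite inner_in_Xs => /andP[vU _].
have Xy : inr (u, v, u \in A) \in X by rewrite outer_in_Xs -(e_bip evu) vU e_sym.
move: pres; rewrite prescribedC -(in_muFf_outerE Xy) => /eqP.
by rewrite -E => /(in_muFf_inj Xy Xx).
Qed.

Lemma in_muFf_restrict (L R : Type) (inX : L -> HV T) (inY : R -> HV T) (h : L -> R) :
  injective inX -> (forall l, inX l \in X) -> (forall l, mu (inX l) = inY (h l)) ->
  injective h /\ (forall l, hadj e (inX l) (inY (h l))).
Proof.
move=> inX_inj X_inX muE; split=> [l l' E|l]; last by rewrite -muE in_muFf_adj.
by apply: inX_inj; apply: in_muFf_inj; rewrite ?X_inX // !muE E.
Qed.

End Matching.

Section Neighbourhood.
Variables (v p q r : T).
Hypotheses (nbE : nbhd e v = [set p; q; r]) (npq : p != q).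
Hypotheses (pF : [set v; p] \in F) (qF : [set v; q] \in F) (rF : [set v; r] \notin F).

Lemma e_nb u : e v u = [|| u == p, u == q | u == r].
Proof. by move/setP/(_ u): nbE; rewrite /nbhd !inE -orbA. Qed.

Let npr : p != r. Proof. by apply: contraNneq rF => <-. Qed.
Let nqr : q != r. Proof. by apply: contraNneq rF => <-. Qed.
Let nqp : q != p. Proof. by rewrite eq_sym. Qed.
Let nrp : r != p. Proof. by rewrite eq_sym. Qed.
Let nrq : r != q. Proof. by rewrite eq_sym. Qed.

Definition inner_set (s : bool * bool) : {set T} :=
  match s with
  | (false, false) => set0
  | (false, true) => [set q; r]
  | (true, false) => [set p; r]
  | (true, true) => [set p; q]
  end.

Lemma mem_inner_set s :
  [/\ p \in inner_set s = s.1, q \in inner_set s = s.2 & r \in inner_set s = s.1 (+) s.2].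
Proof.
by case: s => [[] []]; rewrite !inE ?eqxx ?orbT ?(negbTE npq) ?(negbTE npr) ?(negbTE nqr)
  ?(negbTE nqp) ?(negbTE nrp) ?(negbTE nrq).
Qed.

Lemma inner_set_ok s : inner_ok e v (inner_set s).
Proof.
apply/andP; split.
  apply/subsetP => u; rewrite inE e_nb.
  by case: s => [[] []]; rewrite !inE //; case/orP=> ->; rewrite ?orbT.
by case: s => [[] []]; rewrite ?cards0 // cards2 ?npq ?npr ?nqr.
Qed.

Lemma inner_parity A : inner_ok e v A -> r \in A = (p \in A) (+) (q \in A).
Proof.
case/andP => /subsetP A_nb.
have -> : #|A| = (p \in A) + (q \in A) + (r \in A).
  rewrite (cardsD1 p) (cardsD1 q (A :\ p)) (cardsD1 r (A :\ p :\ q)) !in_setD1 nqp nrp nrq /=.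
  have -> : A :\ p :\ q :\ r = set0.
    apply/setP => u; rewrite !inE; case: (boolP (u \in A)) => [/A_nb|]; rewrite ?andbF //.
    by rewrite /nbhd inE e_nb => /or3P[] /eqP ->; rewrite eqxx /= ?andbF.
  by rewrite cards0 addn0 addnA.
by case: (p \in A); case: (q \in A); case: (r \in A).
Qed.

Lemma inner_setK A : inner_ok e v A -> inner_set (p \in A, q \in A) = A.
Proof.
move=> okA; apply/setP => u; have [Bp Bq Br] := mem_inner_set (p \in A, q \in A).
case: (boolP (e v u)) => [|not_evu].
  by rewrite e_nb; case/or3P => /eqP ->; rewrite ?Bp ?Bq ?Br ?inner_parity.
have out B : inner_ok e v B -> u \notin B.
  by case/andP => /subsetP B_nb _; apply: contra not_evu => /B_nb; rewrite inE.
by rewrite (negbTE (out _ okA)) (negbTE (out _ (inner_set_ok _))).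
Qed.

Definition cp := ~~ f [set v; p].
Definition cq := ~~ f [set v; q].

Definition inner_vertex (s : bool * bool) : HV T := inl (v, inner_set s).

Definition port_vertex (a : port) : HV T :=
  match a with
  | PortP => inr (v, p, cp)
  | PortQ => inr (v, q, cq)
  | PortR j => inr (v, r, j)
  end.

Definition bits_of (x : HV T) : bool * bool :=
  if x is inl (_, A) then (p \in A, q \in A) else (false, false).

Definition port_of (x : HV T) : port :=
  if x is inr (_, u, i) then
    if u == p then PortP else if u == q then PortQ else PortR i
  else PortP.

Lemma inner_vertexK : cancel inner_vertex bits_of.
Proof. by case=> s1 s2; have [/= -> -> _] := mem_inner_set (s1, s2). Qed.

Lemma port_vertexK : cancel port_vertex port_of.
Proof. by case=> [| |j] /=; rewrite ?eqxx ?(negbTE nqp) ?(negbTE nrp) ?(negbTE nrq). Qed.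

Lemma inner_vertex_bits A :
  inner_ok e v A -> inner_vertex (bits_of (inl (v, A))) = inl (v, A).
Proof. by move=> okA; rewrite /inner_vertex inner_setK. Qed.

Lemma port_vertex_free a w u i : port_vertex a = inr (w, u, i) -> ~~ prescribed w u i.
Proof.
rewrite /prescribed; case: a => [| |j] [<- <- <-]; last by rewrite (negbTE rF).
  by rewrite pF /cp; case: (f _).
by rewrite qF /cq; case: (f _).
Qed.

Lemma port_vertex_of u i : e v u -> ~~ prescribed v u i ->
  port_vertex (port_of (inr (v, u, i))) = inr (v, u, i).
Proof.
rewrite e_nb /prescribed => /or3P[] /eqP -> /=.
  all: rewrite ?eqxx ?(negbTE nqp) ?(negbTE nrp) ?(negbTE nrq) //.
  by rewrite pF /= /cp; case: (f _); case: i.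
by rewrite qF /= /cq; case: (f _); case: i.
Qed.

Lemma hadj_inner_port s a : hadj e (inner_vertex s) (port_vertex a) = ladj cp cq s a.
Proof.
have [Bp Bq Br] := mem_inner_set s.
case: a => [| |j] /=; rewrite inner_set_ok eqxx e_nb eqxx ?orbT /=.
- by rewrite Bp eq_sym.
- by rewrite Bq eq_sym.
- by rewrite Br.
Qed.

Lemma hadj_port_inner s a : hadj e (port_vertex a) (inner_vertex s) = ladj cp cq s a.
Proof. by rewrite -hadj_inner_port; case: a. Qed.

Lemma cube_at_inner mu1 mu2 : v \in U ->
  in_muFf U e F f mu1 -> in_muFf U e F f mu2 ->
  forall s x1 x2 x3, x1 \in X -> x2 \in X -> x3 \in X ->
  mu1 x1 = mu2 (inner_vertex s) -> mu1 x2 = mu2 x1 -> mu1 x3 = mu2 x2 ->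
  x3 = inner_vertex s.
Proof.
move=> vU H1 H2; pose h mu s := port_of (mu (inner_vertex s)).
have X_inner s : inner_vertex s \in X by rewrite inner_in_Xs vU inner_set_ok.
have hE mu : in_muFf U e F f mu -> forall s, mu (inner_vertex s) = port_vertex (h mu s).
  move=> Hmu s; rewrite /h; have [u [evu free ->]] := in_muFf_inner Hmu (X_inner s).
  by rewrite port_vertex_of.
have local mu : in_muFf U e F f mu -> (forall s, ladj cp cq s (h mu s)) /\ injective (h mu).
  move=> Hmu; have [inj adj] := in_muFf_restrict Hmu (can_inj inner_vertexK) X_inner (hE _ Hmu).
  by split=> // s; rewrite -hadj_inner_port.
have [adj1 inj1] := local _ H1; have [adj2 inj2] := local _ H2.
apply: (cube_trivial_transfer (can_inj port_vertexK) (hE _ H1) (hE _ H2) _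
  (local_matching_cube adj1 inj1 adj2 inj2)).
move=> [[w A]|[[w u] i]] a Xx.
  move: (Xx); rewrite inner_in_Xs => /andP[_ okA].
  have [u [_ _ ->]] := in_muFf_inner H1 Xx; case: a => [| |j] [wv _ _]; subst w;
    by exists (bits_of (inl (v, A))); rewrite inner_vertex_bits.
have [pres|free] := boolP (prescribed w u i).
  move: (in_muFf_outerE H1 Xx); rewrite pres => /eqP -> E.
  by move: pres; rewrite prescribedC (negbTE (port_vertex_free (esym E))).
by have [A -> _] := in_muFf_outer_inner H1 Xx free; case: a.
Qed.

Lemma cube_at_port mu1 mu2 : v \notin U ->
  in_muFf U e F f mu1 -> in_muFf U e F f mu2 ->
  forall a x1 x2 x3, x1 \in X -> x2 \in X -> x3 \in X ->
  mu1 x1 = mu2 (port_vertex a) -> mu1 x2 = mu2 x1 -> mu1 x3 = mu2 x2 ->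
  x3 = port_vertex a.
Proof.
move=> vU H1 H2; pose g mu a := bits_of (mu (port_vertex a)).
have X_port a : port_vertex a \in X.
  by case: a => [| |j]; rewrite outer_in_Xs vU e_nb eqxx ?orbT.
have gE mu : in_muFf U e F f mu -> forall a, mu (port_vertex a) = inner_vertex (g mu a).
  move=> Hmu a; rewrite /g; have := X_port a.
  case Ea: (port_vertex a) => [y|[[w u] i]] Xx; first by case: a Ea.
  have wv : w = v by case: a Ea => [| |j] [].
  subst w; have [A -> okA] := in_muFf_outer_inner Hmu Xx (port_vertex_free Ea).
  by rewrite inner_vertex_bits.
have local mu : in_muFf U e F f mu -> (forall a, ladj cp cq (g mu a) a) /\ injective (g mu).
  move=> Hmu; have [inj adj] := in_muFf_restrict Hmu (can_inj port_vertexK) X_port (gE _ Hmu).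
  by split=> // a; rewrite -hadj_port_inner.
have [adj1 inj1] := local _ H1; have [adj2 inj2] := local _ H2.
apply: (cube_trivial_transfer (can_inj inner_vertexK) (gE _ H1) (gE _ H2) _
  (local_comatching_cube adj1 inj1 adj2 inj2)).
move=> [[w A]|[[w u] i]] s Xx; first by have [u [_ _ ->]] := in_muFf_inner H1 Xx.
have [pres|free] := boolP (prescribed w u i).
  by move: (in_muFf_outerE H1 Xx); rewrite pres => /eqP ->.
have [B -> _] := in_muFf_outer_inner H1 Xx free; case=> wv _; subst w.
exists (port_of (inr (v, u, i))); rewrite port_vertex_of //.
by move: Xx; rewrite outer_in_Xs => /andP[].
Qed.

End Neighbourhood.

Lemma in_muFf_cube_trivial mu1 mu2 : two_factor e F ->
  in_muFf U e F f mu1 -> in_muFf U e F f mu2 -> cube_trivial X mu1 mu2.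
Proof.
move=> F2 H1 H2 x x1 x2 x3 Xx Xx1 Xx2 Xx3.
case: x Xx => [[v A]|[[v u] i]] Xx.
  have [p [q [r [nbE npq pF qF rF]]]] := two_factor_nbhd v F2.
  move: (Xx); rewrite inner_in_Xs => /andP[vU okA].
  rewrite -(inner_vertex_bits nbE npq pF qF rF okA).
  exact: (cube_at_inner nbE npq pF qF rF vU H1 H2).
move: (Xx); rewrite outer_in_Xs => /andP[vU evu].
have [pres|free] := boolP (prescribed v u i).
  move: (in_muFf_outerE H1 Xx) (in_muFf_outerE H2 Xx); rewrite pres => /eqP E1 /eqP E2.
  have E : mu2 (inr (v, u, i)) = mu1 (inr (v, u, i)) by rewrite E1 E2.
  rewrite E => /(in_muFf_inj H1 Xx1 Xx) ->; rewrite E => /(in_muFf_inj H1 Xx2 Xx) ->.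
  by rewrite E => /(in_muFf_inj H1 Xx3 Xx).
have [p [q [r [nbE npq pF qF rF]]]] := two_factor_nbhd v F2.
rewrite -(port_vertex_of nbE npq pF qF rF evu free).
exact: (cube_at_port nbE npq pF qF rF vU H1 H2).
Qed.

End Gadget.

Theorem mainTheorem4 (T : finType) (U : {set T}) (e : rel T)
    (e_sym : symmetric e)
    (e_bip : forall x y, e x y -> (x \in U) = (y \notin U))
    (e_3reg : forall v : T, #|[set u | e v u]| = 3)
    (n : nat) (eta eta' : HV T -> 'I_n)
    (eta_bij : {in Xs U e &, injective eta} /\ eta @: Xs U e = [set: 'I_n])
    (eta'_bij : {in Ys U e &, injective eta'} /\ eta' @: Ys U e = [set: 'I_n])
    (F : {set {set T}}) (f : {set T} -> bool)
    (mu1 mu2 : HV T -> HV T) :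
  two_factor e F ->
  in_muFf U e F f mu1 -> in_muFf U e F f mu2 ->
  sgn U e eta eta' mu1 = sgn U e eta eta' mu2.
Proof.
move=> F2 H1 H2; case: (H1) (H2) => [pm1 _ _ _] [pm2 _ _ _].
apply: (sgn_eq_of_cube_trivial eta_bij eta'_bij pm1 pm2).
exact: (in_muFf_cube_trivial e_sym e_bip e_3reg F2 H1 H2).
Qed.
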